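(* Let $\Omega\subset\mathbb{R}^d$ be a bounded domain, $\kappa\in L^\infty(\Omega)$ with $\kappa\ge\kappa_0>0$, $a(u,v)=\int_\Omega\kappa\nabla u\cdot\nabla v\,dx$, $\|u\|_a^2=a(u,u)$. Let $V_{H,1},V_{H,2}\subset H^1_0(\Omega)$ be finite-dimensional, $L^2(\Omega)$-orthogonal subspaces, $\tau>0$, $N\ge2$. Let $u_{H,1}^n\in V_{H,1}$, $u_{H,2}^n\in V_{H,2}$ ($n=0,\dots,N$) satisfy for $n=1,\dots,N-1$ the scheme $$(u_{H,1}^{n+1}-2u_{H,1}^n+u_{H,1}^{n-1},w)+\frac{\tau^2}{2}a(u_{H,1}^{n+1}+u_{H,1}^{n-1}+2u_{H,2}^n,w)=0\quad\forall w\in V_{H,1},$$ $$(u_{H,2}^{n+1}-2u_{H,2}^n+u_{H,2}^{n-1},w)+\frac{\tau^2}{2}a(u_{H,1}^{n+1}+u_{H,1}^{n-1}+2u_{H,2}^n,w)=0\quad\forall w\in V_{H,2}.$$ Define $(u,v)_{m_\tau}=(u,v)+\frac{\tau^2}{2}a(u,v)$, $\|v\|_{m_\tau}^2=(v,v)_{m_\tau}$; operators $b_\tau:V_{H,1}\to V_{H,1}$, $c_\tau,d_\tau:V_{H,1}+V_{H,2}\to V_{H,1}$ by $(b_\tau(v_1),v)_{m_\tau}=(v_1,v)$, $(c_\tau(u),v)_{m_\tau}=\frac{\tau^2}{2}a(u,v)$, $a(d_\tau(u),v)=a(u,v)$ for all $v\in V_{H,1}$; $\|v_1\|_{s_\tau}^2=\|v_1\|^2-\|b_\tau(v_1)\|_{m_\tau}^2$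 for $v_1\in V_{H,1}$; and $\|v_2\|_{n_\tau}^2=\frac{\tau^2}{2}\|v_2\|_a^2-\|c_\tau(v_2)\|_{m_\tau}^2-\|d_\tau(v_2)\|_{s_\tau}^2$ for $v_2\in V_{H,2}$. Let $$E^{n+\frac12}=\|b_\tau(u_{H,1}^{n+1})-c_\tau(u_{H,2}^{n+1})-b_\tau(u_{H,1}^n)+c_\tau(u_{H,2}^n)\|_{m_\tau}^2+\|u_{H,2}^{n+1}-u_{H,2}^n\|^2-\frac{\tau^2}{2}\|u_{H,2}^{n+1}-u_{H,2}^n\|_a^2$$ $$+\|u_{H,1}^{n+1}+d_\tau(u_{H,2}^{n+1})\|_{s_\tau}^2+\|u_{H,2}^{n+1}\|_{n_\tau}^2+\|u_{H,1}^n+d_\tau(u_{H,2}^n)\|_{s_\tau}^2+\|u_{H,2}^n\|_{n_\tau}^2.$$ Then $E^{n+\frac12}=E^{n-\frac12}$ for $n=1,\dots,N-1$, and the scheme is stable provided $\sup_{v\in V_{H,2}}\frac{\|v\|_a^2}{\|v\|^2}\le\frac{2}{\tau^2}$: in that case each of the terms in $E^{n+\frac12}$ (grouping $\|u_{H,2}^{n+1}-u_{H,2}^n\|^2-\frac{\tau^2}{2}\|u_{H,2}^{n+1}-u_{H,2}^n\|_a^2$ as one term) is nonnegative and hence bounded by $E^{\frac12}$ for all $n=0,\dots,N-1$.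
   Context: $(\cdot,\cdot)$ and $\|\cdot\|$ denote the $L^2(\Omega)$ inner product and norm. The scheme is the $\omega=0$ variant of the partially explicit splitting for the wave equation $u_{tt}=\nabla\cdot(\kappa\nabla u)$ with homogeneous Dirichlet boundary conditions, written under $L^2$-orthogonality of $V_{H,1}$ and $V_{H,2}$. *)

From HB Require Import structures.
From mathcomp Require Import all_boot all_order all_algebra.
From mathcomp Require Import reals.
Set Implicit Arguments. Unset Strict Implicit. Unset Printing Implicit Defensive.
Import Order.TTheory GRing.Theory Num.Theory.
Local Open Scope ring_scope.

Definition sym_bilinear (R : realType) (V : vectType R) (f : V -> V -> R) :=
  (forall x y, f x y = f y x) /\
  (forall (k : R) (x y z : V), f (k *: x + y) z = k * f x z + f y z).

Definition pos_def (R : realType) (V : vectType R) (f : V -> V -> R) :=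
  forall x : V, x != 0 -> 0 < f x x.

Definition mtau (R : realType) (V : vectType R) (l2 a : V -> V -> R) (tau : R)
  (u v : V) : R := l2 u v + tau ^+ 2 / 2 * a u v.

Definition ssq (R : realType) (V : vectType R) (l2 a : V -> V -> R) (tau : R)
  (b : V -> V) (v : V) : R := l2 v v - mtau l2 a tau (b v) (b v).

Definition nsq (R : realType) (V : vectType R) (l2 a : V -> V -> R) (tau : R)
  (b c d : V -> V) (v : V) : R :=
  tau ^+ 2 / 2 * a v v - mtau l2 a tau (c v) (c v) - ssq l2 a tau b (d v).

Definition Eterm1 (R : realType) (V : vectType R) (l2 a : V -> V -> R) (tau : R)
  (b c : V -> V) (u1 u2 : nat -> V) (n : nat) : R :=
  let w := b (u1 n.+1) - c (u2 n.+1) - b (u1 n) + c (u2 n) in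
  mtau l2 a tau w w.

Definition Eterm2 (R : realType) (V : vectType R) (l2 a : V -> V -> R) (tau : R)
  (u2 : nat -> V) (n : nat) : R :=
  let dl := u2 n.+1 - u2 n in l2 dl dl - tau ^+ 2 / 2 * a dl dl.

Definition Eterm3 (R : realType) (V : vectType R) (l2 a : V -> V -> R) (tau : R)
  (b d : V -> V) (u1 u2 : nat -> V) (n : nat) : R :=
  ssq l2 a tau b (u1 n.+1 + d (u2 n.+1)).

Definition Eterm4 (R : realType) (V : vectType R) (l2 a : V -> V -> R) (tau : R)
  (b c d : V -> V) (u2 : nat -> V) (n : nat) : R :=
  nsq l2 a tau b c d (u2 n.+1).

Definition Eterm5 (R : realType) (V : vectType R) (l2 a : V -> V -> R) (tau : R)
  (b d : V -> V) (u1 u2 : nat -> V) (n : nat) : R :=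
  ssq l2 a tau b (u1 n + d (u2 n)).

Definition Eterm6 (R : realType) (V : vectType R) (l2 a : V -> V -> R) (tau : R)
  (b c d : V -> V) (u2 : nat -> V) (n : nat) : R :=
  nsq l2 a tau b c d (u2 n).

(* energy n = E^{n+1/2} *)
Definition energy (R : realType) (V : vectType R) (l2 a : V -> V -> R) (tau : R)
  (b c d : V -> V) (u1 u2 : nat -> V) (n : nat) : R :=
  Eterm1 l2 a tau b c u1 u2 n + Eterm2 l2 a tau u2 n + Eterm3 l2 a tau b d u1 u2 n
  + Eterm4 l2 a tau b c d u2 n + Eterm5 l2 a tau b d u1 u2 n
  + Eterm6 l2 a tau b c d u2 n.

(* Put s = u1 + d u2 and e = d u2.  The first equation says that
   b u1^n - c u2^n = b s^n - e^n is the midpoint of u1^(n+1) and u1^(n-1).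
   Since b is m_tau-self-adjoint on V_{H,1}, the first, third and fifth terms
   of the energy then change by tau^2/2 a(s^(n+1) + s^(n-1), e^(n+1) - e^(n-1)),
   while testing the second equation with u2^(n+1) - u2^(n-1) shows that the
   remaining terms change by exactly the opposite amount.  For stability,
   ||v||_s^2 = ||v - b v||^2 + tau^2/2 ||b v||_a^2 and
   ||q||_n^2 = tau^2/2 ||q - d q||_a^2 are nonnegative, and the CFL condition
   takes care of the second term. *)

From HB Require Import structures.
From mathcomp Require Import all_boot all_order all_algebra.
From mathcomp Require Import reals.
From mathcomp Require Import ring lra zify.
Import Order.TTheory GRing.Theory Num.Theory.
Set Implicit Arguments. Unset Strict Implicit.
Local Open Scope ring_scope.

Section SymBilinear.
Variables (R : realType) (V : vectType R) (f : V -> V -> R).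
Hypothesis Hf : sym_bilinear f.

Lemma bilDl x y z : f (x + y) z = f x z + f y z.
Proof. by have := Hf.2 1 x y z; rewrite scale1r mul1r. Qed.

Lemma bil0l z : f 0 z = 0.
Proof. by apply: (addrI (f 0 z)); rewrite -bilDl !addr0. Qed.

Lemma bilZl k x z : f (k *: x) z = k * f x z.
Proof. by have := Hf.2 k x 0 z; rewrite addr0 bil0l addr0. Qed.

Lemma bilNl x z : f (- x) z = - f x z.
Proof. by rewrite -scaleN1r bilZl mulN1r. Qed.

Lemma bilBl x y z : f (x - y) z = f x z - f y z.
Proof. by rewrite bilDl bilNl. Qed.

Lemma bilDr x y z : f z (x + y) = f z x + f z y.
Proof. by rewrite Hf.1 bilDl !(Hf.1 z). Qed.

Lemma bilNr x z : f z (- x) = - f z x.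
Proof. by rewrite Hf.1 bilNl (Hf.1 z). Qed.

Lemma bilBr x y z : f z (x - y) = f z x - f z y.
Proof. by rewrite bilDr bilNr. Qed.

Lemma bil_subsq x y : f x x - f y y = f (x + y) (x - y).
Proof. by rewrite bilDl !bilBr (Hf.1 y x); ring. Qed.

Lemma bil_second_diff x0 x1 x2 :
  f (x2 - 2%:R *: x1 + x0) (x2 - x0) = f (x2 - x1) (x2 - x1) - f (x1 - x0) (x1 - x0).
Proof.
rewrite bil_subsq subrKA Hf.1; congr (f _ _).
by rewrite scaler_nat mulr2n opprD addrA opprB [RHS]addrA [RHS]addrAC.
Qed.

Hypothesis Hfpd : pos_def f.

Lemma pos_def_ge0 x : 0 <= f x x.
Proof. by have [->|/Hfpd/ltW//] := eqVneq x 0; rewrite bil0l. Qed.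

Lemma pos_def_eq (U : {vspace V}) x y : x \in U -> y \in U ->
  (forall v, v \in U -> f x v = f y v) -> x = y.
Proof.
move=> xU yU fxy; apply/eqP; rewrite -subr_eq0; apply/negPn/negP => /Hfpd.
by rewrite bilBl fxy ?rpredB // subrr ltxx.
Qed.

End SymBilinear.

Lemma mtau_sym_bilinear (R : realType) (V : vectType R) (l2 a : V -> V -> R) tau :
  sym_bilinear l2 -> sym_bilinear a -> sym_bilinear (mtau l2 a tau).
Proof.
move=> Hl2 Ha; split=> [x y|k x y z]; rewrite /mtau; first by rewrite Hl2.1 Ha.1.
by rewrite Hl2.2 Ha.2; ring.
Qed.

Lemma mtau_pos_def (R : realType) (V : vectType R) (l2 a : V -> V -> R) tau :
  pos_def l2 -> sym_bilinear a -> pos_def a -> pos_def (mtau l2 a tau).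
Proof.
move=> Hl2pd Ha Hapd x /Hl2pd l2x; apply: ltr_wpDr l2x.
by rewrite mulr_ge0 ?divr_ge0 ?sqr_ge0 ?pos_def_ge0.
Qed.

Lemma cfl_le (R : realFieldType) (tau x y : R) :
  tau != 0 -> x <= 2 / tau ^+ 2 * y -> tau ^+ 2 / 2 * x <= y.
Proof.
move=> tau0 /(ler_wpM2l (divr_ge0 (sqr_ge0 tau) (ler0n _ 2))).
rewrite mulrA; have -> : tau ^+ 2 / 2 * (2 / tau ^+ 2) = 1 by field.
by rewrite mul1r.
Qed.

Lemma step_eq_first (T : Type) (f : nat -> T) M :
  (forall n, (1 <= n)%N -> (n <= M)%N -> f n = f n.-1) ->
  forall n, (n <= M)%N -> f n = f 0.
Proof. by move=> step; elim=> [//|n IH] hn; rewrite step // IH // ltnW. Qed.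

Section Scheme.
Variables (R : realType) (V : vectType R) (l2 a : V -> V -> R) (tau : R).
Variables (V1 V2 : {vspace V}) (b c d : V -> V).
Hypotheses (Hl2 : sym_bilinear l2) (Hl2pd : pos_def l2).
Hypotheses (Ha : sym_bilinear a) (Hapd : pos_def a).

Local Notation m := (mtau l2 a tau).
Local Notation t2 := (tau ^+ 2 / 2).

Hypothesis Hb : forall v1, v1 \in V1 ->
  b v1 \in V1 /\ forall v, v \in V1 -> m (b v1) v = l2 v1 v.
Hypothesis Hc : forall u, u \in (V1 + V2)%VS ->
  c u \in V1 /\ forall v, v \in V1 -> m (c u) v = t2 * a u v.
Hypothesis Hd : forall u, u \in (V1 + V2)%VS ->
  d u \in V1 /\ forall v, v \in V1 -> a (d u) v = a u v.

Let Hm : sym_bilinear m := mtau_sym_bilinear tau Hl2 Ha.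
Let Hmpd : pos_def m := mtau_pos_def tau Hl2pd Ha Hapd.
Let t2_ge0 : 0 <= t2. Proof. by rewrite divr_ge0 ?sqr_ge0. Qed.
Let l2_ge0 : forall x, 0 <= l2 x x := pos_def_ge0 Hl2 Hl2pd.
Let a_ge0 : forall x, 0 <= a x x := pos_def_ge0 Ha Hapd.
Let V2_sub q : q \in V2 -> q \in (V1 + V2)%VS.
Proof. exact: subvP (addvSr V1 V2) q. Qed.

Lemma b_in_V1 x : x \in V1 -> b x \in V1. Proof. by case/Hb. Qed.

Lemma mtau_b x v : x \in V1 -> v \in V1 -> m (b x) v = l2 x v.
Proof. by case/Hb=> _; apply. Qed.

Lemma d_in_V1 q : q \in V2 -> d q \in V1. Proof. by case/V2_sub/Hd. Qed.

Lemma a_d q v : q \in V2 -> v \in V1 -> a (d q) v = a q v.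
Proof. by case/V2_sub/Hd=> _; apply. Qed.

Lemma bD x y : x \in V1 -> y \in V1 -> b (x + y) = b x + b y.
Proof.
move=> xV1 yV1; have xyV1 : x + y \in V1 by rewrite rpredD.
apply: (pos_def_eq Hm Hmpd (U := V1)); rewrite ?rpredD ?b_in_V1 // => v vV1.
by rewrite (bilDl Hm) !mtau_b // (bilDl Hl2).
Qed.

Lemma c_V2E q : q \in V2 -> c q = d q - b (d q).
Proof.
move=> qV2; have [cV1 mtau_c] := Hc (V2_sub qV2); have eV1 := d_in_V1 qV2.
apply: (pos_def_eq Hm Hmpd (U := V1)); rewrite ?rpredB ?b_in_V1 // => v vV1.
by rewrite mtau_c // (bilBl Hm) mtau_b // -a_d // /mtau; ring.
Qed.

Lemma z_decomp p q : p \in V1 -> q \in V2 -> b p - c q = b (p + d q) - d q.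
Proof. by move=> pV1 qV2; rewrite bD ?d_in_V1 // c_V2E // opprB addrA. Qed.

Lemma mtau_subb x v : x \in V1 -> v \in V1 -> m (x - b x) v = t2 * a x v.
Proof. by move=> xV1 vV1; rewrite (bilBl Hm) mtau_b // /mtau; ring. Qed.

Lemma ssqE x : x \in V1 ->
  ssq l2 a tau b x = l2 (x - b x) (x - b x) + t2 * a (b x) (b x).
Proof.
move=> xV1; have mbb := mtau_b xV1 (b_in_V1 xV1); rewrite /ssq mbb.
move: mbb; rewrite /mtau (bilBl Hl2) !(bilBr Hl2) (Hl2.1 (b x) x); lra.
Qed.

Lemma ssq_ge0 x : x \in V1 -> 0 <= ssq l2 a tau b x.
Proof.
move=> xV1; rewrite ssqE //.
exact: addr_ge0 (l2_ge0 _) (mulr_ge0 t2_ge0 (a_ge0 _)).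
Qed.

Lemma ssqB x y : x \in V1 -> y \in V1 ->
  ssq l2 a tau b x - ssq l2 a tau b y = m (b x - b y) ((x - b x) + (y - b y)).
Proof.
move=> xV1 yV1; have [bxV1 byV1] := (b_in_V1 xV1, b_in_V1 yV1).
rewrite /ssq (bilBl Hm) !(bilDr Hm, bilNr Hm) (Hm.1 (b y) (b x)) !mtau_b //.
by rewrite (Hl2.1 y x); ring.
Qed.

Lemma nsqE q : q \in V2 ->
  nsq l2 a tau b c d q = t2 * (a q q - a (d q) (d q)).
Proof.
move=> qV2; have eV1 := d_in_V1 qV2; have mbe := mtau_b eV1 eV1.
rewrite /nsq /ssq c_V2E // (bilBl Hm) !(bilBr Hm) (Hm.1 (d q) (b (d q))) mbe.
by rewrite /mtau; ring.
Qed.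

Lemma nsq_ge0 q : q \in V2 -> 0 <= nsq l2 a tau b c d q.
Proof.
move=> qV2; have ade : a (d q) (d q) = a q (d q) by rewrite a_d ?d_in_V1.
rewrite nsqE // mulr_ge0 //; have := a_ge0 (q - d q).
by rewrite (bilBl Ha) !(bilBr Ha) (Ha.1 (d q) q) ade; lra.
Qed.

Lemma scheme1_midpoint p0 p1 p2 q1 :
  p0 \in V1 -> p1 \in V1 -> p2 \in V1 -> q1 \in V2 ->
  (forall w, w \in V1 ->
     l2 (p2 - 2%:R *: p1 + p0) w + t2 * a (p2 + p0 + 2%:R *: q1) w = 0) ->
  p2 + p0 = 2%:R *: (b p1 - c q1).
Proof.
move=> p0V1 p1V1 p2V1 q1V2 eq1; have [cV1 mtau_c] := Hc (V2_sub q1V2).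
apply: (pos_def_eq Hm Hmpd (U := V1)); rewrite ?rpredD ?rpredZ ?rpredB ?b_in_V1 //.
move=> v vV1; have := eq1 v vV1.
rewrite (bilZl Hm) (bilBl Hm) mtau_b // mtau_c // /mtau.
by rewrite !(bilDl Hl2, bilNl Hl2, bilZl Hl2) !(bilDl Ha, bilZl Ha); lra.
Qed.

Lemma V1_energy_step s0 s2 e0 e2 z :
  s0 \in V1 -> s2 \in V1 -> e0 \in V1 -> e2 \in V1 ->
  2%:R *: z = (s2 - e2) + (s0 - e0) ->
  m (b s2 - e2 - z) (b s2 - e2 - z) - m (z - (b s0 - e0)) (z - (b s0 - e0))
  + ssq l2 a tau b s2 - ssq l2 a tau b s0 = t2 * a (s2 + s0) (e2 - e0).
Proof.
move=> s0V1 s2V1 e0V1 e2V1 hz.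
set r := (s2 - b s2) + (s0 - b s0).
rewrite (bil_subsq Hm).
have -> : b s2 - e2 - z + (z - (b s0 - e0)) = (b s2 - e2) - (b s0 - e0).
  by rewrite addrA subrK.
have -> : b s2 - e2 - z - (z - (b s0 - e0)) = - r.
  rewrite opprB addrACA -opprD -mulr2n -scaler_nat hz opprD addrACA.
  by rewrite !opprB !subrKA opprD !opprB.
have mre : m r (e2 - e0) = t2 * a (s2 + s0) (e2 - e0).
  by rewrite (bilDl Hm) !mtau_subb ?rpredB // (bilDl Ha); ring.
rewrite -addrA ssqB // (bilNr Hm) !(bilBl Hm) -mre (Hm.1 r).
by rewrite -/r (bilBl Hm); ring.
Qed.

Lemma V2_energy_step p0 p2 q0 q1 q2 :
  p0 \in V1 -> p2 \in V1 -> q0 \in V2 -> q2 \in V2 ->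
  l2 (q2 - 2%:R *: q1 + q0) (q2 - q0)
    + t2 * a (p2 + p0 + 2%:R *: q1) (q2 - q0) = 0 ->
  (l2 (q2 - q1) (q2 - q1) - t2 * a (q2 - q1) (q2 - q1))
  - (l2 (q1 - q0) (q1 - q0) - t2 * a (q1 - q0) (q1 - q0))
  + nsq l2 a tau b c d q2 - nsq l2 a tau b c d q0
  = - (t2 * a ((p2 + d q2) + (p0 + d q0)) (d q2 - d q0)).
Proof.
move=> p0V1 p2V1 q0V2 q2V2.
have ppd : a (p2 + p0) (q2 - q0) = a (p2 + p0) (d q2 - d q0).
  by rewrite !(bilBr Ha) !(Ha.1 (p2 + p0)) !a_d ?rpredD.
rewrite (bilDl Ha (p2 + p0)) (bilZl Ha) ppd (bil_second_diff Hl2) => eq2.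
have ha : a (q2 - q1) (q2 - q1) - a (q1 - q0) (q1 - q0)
        = a q2 (q2 - q0) - 2%:R * a q1 (q2 - q0) + a q0 (q2 - q0).
  by rewrite -(bil_second_diff Ha) (bilDl Ha) (bilBl Ha) (bilZl Ha).
have qq : a q2 q2 - a q0 q0 = a q2 (q2 - q0) + a q0 (q2 - q0).
  by rewrite (bil_subsq Ha) (bilDl Ha).
rewrite !nsqE // addrACA (bilDl Ha (p2 + p0)) -(bil_subsq Ha).
by move: (congr1 ( *%R t2) ha) (congr1 ( *%R t2) qq) => /=; lra.
Qed.

Lemma energy_step (u1 u2 : nat -> V) k :
  (forall j, (j <= k.+2)%N -> u1 j \in V1) ->
  (forall j, (j <= k.+2)%N -> u2 j \in V2) ->
  (forall w, w \in V1 -> l2 (u1 k.+2 - 2%:R *: u1 k.+1 + u1 k) w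
     + t2 * a (u1 k.+2 + u1 k + 2%:R *: u2 k.+1) w = 0) ->
  (forall w, w \in V2 -> l2 (u2 k.+2 - 2%:R *: u2 k.+1 + u2 k) w
     + t2 * a (u1 k.+2 + u1 k + 2%:R *: u2 k.+1) w = 0) ->
  energy l2 a tau b c d u1 u2 k.+1 = energy l2 a tau b c d u1 u2 k.
Proof.
move=> u1V1 u2V2 eq1 eq2.
have [p0V1 p1V1 p2V1] : [/\ u1 k \in V1, u1 k.+1 \in V1 & u1 k.+2 \in V1].
  by split; apply: u1V1; lia.
have [q0V2 q1V2 q2V2] : [/\ u2 k \in V2, u2 k.+1 \in V2 & u2 k.+2 \in V2].
  by split; apply: u2V2; lia.
have [e0V1 e2V1] := (d_in_V1 q0V2, d_in_V1 q2V2).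
set z := fun j => b (u1 j) - c (u2 j).
have Eterm1E j : Eterm1 l2 a tau b c u1 u2 j = m (z j.+1 - z j) (z j.+1 - z j).
  by rewrite /Eterm1 /z /= [in RHS]opprB [in RHS]addrA [in RHS]addrAC.
have mid : 2%:R *: z k.+1 = (u1 k.+2 + d (u2 k.+2) - d (u2 k.+2))
                          + (u1 k + d (u2 k) - d (u2 k)).
  by rewrite !addrK (scheme1_midpoint p0V1 p1V1 p2V1 q1V2 eq1).
have V1step := V1_energy_step (rpredD p0V1 e0V1) (rpredD p2V1 e2V1) e0V1 e2V1 mid.
have V2step := V2_energy_step p0V1 p2V1 q0V2 q2V2 (eq2 _ (rpredB q2V2 q0V2)).
move: V1step V2step; rewrite /energy !Eterm1E /z.
rewrite (z_decomp p2V1 q2V2) (z_decomp p0V1 q0V2).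
rewrite /Eterm2 /Eterm3 /Eterm4 /Eterm5 /Eterm6 /=; lra.
Qed.

Lemma energy_terms_ge0 (u1 u2 : nat -> V) n :
  tau != 0 -> (forall v, v \in V2 -> a v v <= 2 / tau ^+ 2 * l2 v v) ->
  u1 n \in V1 -> u1 n.+1 \in V1 -> u2 n \in V2 -> u2 n.+1 \in V2 ->
  0 <= Eterm1 l2 a tau b c u1 u2 n /\ 0 <= Eterm2 l2 a tau u2 n /\
  0 <= Eterm3 l2 a tau b d u1 u2 n /\ 0 <= Eterm4 l2 a tau b c d u2 n /\
  0 <= Eterm5 l2 a tau b d u1 u2 n /\ 0 <= Eterm6 l2 a tau b c d u2 n.
Proof.
move=> tau0 stab p0V1 p1V1 q0V2 q1V2; split; first exact: pos_def_ge0.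
split; first by rewrite subr_ge0 cfl_le ?stab ?rpredB.
by rewrite !ssq_ge0 ?nsq_ge0 ?rpredD ?d_in_V1.
Qed.

End Scheme.

Unset Implicit Arguments. Set Strict Implicit.

Theorem mainTheorem4 (R : realType) (V : vectType R)
  (l2 a : V -> V -> R)
  (Hl2 : sym_bilinear l2) (Hl2pd : pos_def l2)
  (Ha : sym_bilinear a) (Hapd : pos_def a)
  (V1 V2 : {vspace V})
  (Horth : forall x y, x \in V1 -> y \in V2 -> l2 x y = 0)
  (tau : R) (Htau : 0 < tau) (N : nat) (HN : (2 <= N)%N)
  (b c d : V -> V)
  (Hb : forall v1, v1 \in V1 ->
        b v1 \in V1 /\ forall v, v \in V1 -> mtau l2 a tau (b v1) v = l2 v1 v)
  (Hc : forall u, u \in (V1 + V2)%VS ->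
        c u \in V1 /\ forall v, v \in V1 -> mtau l2 a tau (c u) v = tau ^+ 2 / 2 * a u v)
  (Hd : forall u, u \in (V1 + V2)%VS ->
        d u \in V1 /\ forall v, v \in V1 -> a (d u) v = a u v)
  (u1 u2 : nat -> V)
  (Hu1 : forall n, (n <= N)%N -> u1 n \in V1)
  (Hu2 : forall n, (n <= N)%N -> u2 n \in V2)
  (Hs1 : forall n, (1 <= n)%N -> (n <= N - 1)%N -> forall w, w \in V1 ->
     l2 (u1 n.+1 - 2%:R *: u1 n + u1 n.-1) w
     + tau ^+ 2 / 2 * a (u1 n.+1 + u1 n.-1 + 2%:R *: u2 n) w = 0)
  (Hs2 : forall n, (1 <= n)%N -> (n <= N - 1)%N -> forall w, w \in V2 ->
     l2 (u2 n.+1 - 2%:R *: u2 n + u2 n.-1) w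
     + tau ^+ 2 / 2 * a (u1 n.+1 + u1 n.-1 + 2%:R *: u2 n) w = 0) :
  (forall n, (1 <= n)%N -> (n <= N - 1)%N ->
     energy l2 a tau b c d u1 u2 n = energy l2 a tau b c d u1 u2 n.-1)
  /\
  ((forall v, v \in V2 -> a v v <= 2 / tau ^+ 2 * l2 v v) ->
   forall n, (n <= N - 1)%N ->
     let E0 := energy l2 a tau b c d u1 u2 0 in
     ((0 <= Eterm1 l2 a tau b c u1 u2 n <= E0) /\
         (0 <= Eterm2 l2 a tau u2 n <= E0) /\
         (0 <= Eterm3 l2 a tau b d u1 u2 n <= E0) /\
         (0 <= Eterm4 l2 a tau b c d u2 n <= E0) /\
         (0 <= Eterm5 l2 a tau b d u1 u2 n <= E0) /\
         (0 <= Eterm6 l2 a tau b c d u2 n <= E0))).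
Proof.
have step n : (1 <= n)%N -> (n <= N - 1)%N ->
    energy l2 a tau b c d u1 u2 n = energy l2 a tau b c d u1 u2 n.-1.
  case: n => [//|k] _ hk; apply: (energy_step Hl2 Hl2pd Ha Hapd Hb Hc Hd).
  - by move=> j hj; apply: Hu1; lia.
  - by move=> j hj; apply: Hu2; lia.
  - exact: Hs1.
  - exact: Hs2.
split=> // stab n hn E0.
have En : energy l2 a tau b c d u1 u2 n = E0 by rewrite (step_eq_first step).
have [p0V1 p1V1] : u1 n \in V1 /\ u1 n.+1 \in V1 by split; apply: Hu1; lia.
have [q0V2 q1V2] : u2 n \in V2 /\ u2 n.+1 \in V2 by split; apply: Hu2; lia.
have [h1 [h2 [h3 [h4 [h5 h6]]]]] := energy_terms_ge0 Hl2 Hl2pd Ha Hapd Hb Hc Hd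
  (lt0r_neq0 Htau) stab p0V1 p1V1 q0V2 q1V2.
move: En; rewrite /energy => En.
by do !split; apply/andP; split; lra.
Qed.
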